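(* For $x\in\mathfrak S_G$, $W\in S_\infty(G)\times S_\infty(G)$ and $c\in[G]$, the quantity $[p_n(xW)](c)-[p_n(x)](c)$ does not depend on $n$, provided $n$ is large enough that $W\in S_n(G)\times S_n(G)$. (Its common value is denoted $C_c(x,W)$.)
   Context: $G$ compact; $[G]$ its conjugacy classes. $S_n(G)=G^n\rtimes S_n$, elements $((g_1,\dots,g_n),s)$, product $((g_i),s)((h_i),t)=((g_ih_{s^{-1}(i)}),st)$. For $x=((g_i),s)$, the color of a cycle $(i_1\cdots i_r)$ of $s$ is the conjugacy class of $g_{i_r}\cdots g_{i_1}$; $[x](c)$ = number of cycles of color $c$. Canonical projection $p_{n,n+1}:S_{n+1}(G)\to S_n(G)$: for $\tilde x=((g_1,\dots,g_{n+1}),\tilde s)$, if $\tilde s(n+1)=n+1$, restrict; if $n+1$ lies in a cycle $i_1\to\cdots\to i_m\to n+1\to i_{m+1}\to\cdots\to i_r$, delete $n+1$ from the cycle and replace $(g_1,\dots,g_{n+1})$ by $(g_1,\dots,g_n)$ with $g_{i_{m+1}}$ replaced by $g_{i_{m+1}}g_{n+1}$. $\mathfrak S_G=\varprojlim S_n(G)$ is the set of sequences $x=(x_1,x_2,\dots)$, $x_n\in S_n(G)$, $p_{n,n+1}(x_{n+1})=x_n$; $p_n(x)=x_n$. $S_\infty(G)=\bigcup_nS_n(G)$ via $((g_1,\dots,g_n),s)\mapsto((g_1,\dots,g_n,e_G),s)$. For $W=(w_1,w_2)\in S_\infty(G)\times S_\infty(G)$, $xW=y$ with $y_n=w_2^{-1}x_nw_1$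 for all $n$ such that $w_1,w_2\in S_n(G)$. *)

From HB Require Import structures.
From mathcomp Require Import all_boot all_order all_fingroup.
From mathcomp Require Import boolp classical_sets topology.
Set Implicit Arguments.
Unset Strict Implicit.
Unset Printing Implicit Defensive.

Local Open Scope classical_set_scope.

Section CompactGroup.
Variables (G : topologicalType) (mul : G -> G -> G) (inv : G -> G) (e : G).

Definition compact_group : Prop :=
  [/\ (forall a b c, mul a (mul b c) = mul (mul a b) c),
      (forall a, mul e a = a /\ mul a e = a),
      (forall a, mul (inv a) a = e /\ mul a (inv a) = e),
      continuous (fun p : G * G => mul p.1 p.2) /\ continuous inv
    & hausdorff_space G /\ compact [set: G]].

Definition conj_class (c : set G) : Prop :=
  exists a, c = [set b | exists h, b = mul (mul h a) (inv h)].
End CompactGroup.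

(* S_n(G) = G^n \rtimes S_n : elements ((g_1,..,g_n), s). *)
Definition Sn (G : Type) (n : nat) : Type := ({ffun 'I_n -> G} * 'S_n)%type.

Section Wreath.
Variables (G : Type) (mul : G -> G -> G) (inv : G -> G) (e : G).

(* ((g_i),s)((h_i),t) = ((g_i h_{s^{-1}(i)}), st), with st = s o t. *)
Definition smul n (x y : Sn G n) : Sn G n :=
  ([ffun i => mul (x.1 i) (y.1 ((x.2)^-1%g i))], (y.2 * x.2)%g).

Definition sinv n (x : Sn G n) : Sn G n :=
  ([ffun i => inv (x.1 (x.2 i))], (x.2)^-1%g).

Fixpoint cycprod n (g : {ffun 'I_n -> G}) (s : 'S_n) (i : 'I_n) (k : nat) : G :=
  match k with
  | 0 => e
  | k'.+1 => mul (g ((s ^+ k')%g i)) (cycprod g s i k')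
  end.

(* colour of the cycle of s through i (starting at i_1 = i):
   g_{i_r} ... g_{i_1}, an element whose conjugacy class is the colour. *)
Definition cycle_elt n (x : Sn G n) (i : 'I_n) : G :=
  cycprod x.1 x.2 i #|porbit x.2 i|.

(* [x](c) : number of cycles of x of colour c. *)
Definition ncol n (x : Sn G n) (c : set G) : nat :=
  #|[set O in porbits x.2 | `[< exists2 i, i \in O & c (cycle_elt x i) >]]|.

Definition proj_perm_fun n (s : 'S_n.+1) (i : 'I_n) : 'I_n :=
  let j := s (lift ord_max i) in
  let k := if j == ord_max then s ord_max else j in
  odflt i (unlift ord_max k).

Lemma proj_perm_key n (s : 'S_n.+1) (i : 'I_n) :
  lift ord_max (proj_perm_fun s i) =
  (if s (lift ord_max i) == ord_max then s ord_max else s (lift ord_max i)).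
Proof.
rewrite /proj_perm_fun.
have ne : (if s (lift ord_max i) == ord_max then s ord_max else s (lift ord_max i))
          != ord_max.
  case: (boolP (s (lift ord_max i) == ord_max)) => [/eqP E|//].
  apply/eqP => E2; have /negP := neq_lift (@ord_max n) i; apply.
  by apply/eqP; apply: (@perm_inj _ s); rewrite E2 E.
by case: unliftP ne => [j -> //|-> ]; rewrite eqxx.
Qed.

Lemma proj_perm_inj n (s : 'S_n.+1) : injective (proj_perm_fun s).
Proof.
move=> i1 i2 E.
have := congr1 (lift ord_max) E; rewrite !proj_perm_key.
have nm i : lift ord_max i != (@ord_max n) by rewrite eq_sym neq_lift.
case: (boolP (s (lift ord_max i1) == ord_max)) => [/eqP E1|N1];
  case: (boolP (s (lift ord_max i2) == ord_max)) => [/eqP E2|N2] E3.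
- by apply: (@lift_inj _ ord_max); apply: (@perm_inj _ s); rewrite E1 E2.
- by move: (nm i2); rewrite -(perm_inj E3) eqxx.
- by move: (nm i1); rewrite (perm_inj E3) eqxx.
- by apply: (@lift_inj _ ord_max); apply: (@perm_inj _ s).
Qed.

Definition proj_perm n (s : 'S_n.+1) : 'S_n := perm (@proj_perm_inj n s).

Definition proj n (x : Sn G n.+1) : Sn G n :=
  let g := x.1 in let s := x.2 in
  ([ffun i => if (s ord_max != ord_max) && (lift ord_max i == s ord_max)
              then mul (g (lift ord_max i)) (g ord_max)
              else g (lift ord_max i)], proj_perm s).

(* The inverse limit \mathfrak S_G: compatible sequences (x_n)_n. *)
Definition is_thread (x : forall n, Sn G n) : Prop :=
  forall n, proj (x n.+1) = x n.

Definition emb1 n (x : Sn G n) : Sn G n.+1 :=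
  ([ffun i => if unlift ord_max i is Some j then x.1 j else e],
   lift_perm ord_max ord_max x.2).

Fixpoint emb m k (x : Sn G m) : Sn G (k + m) :=
  match k with
  | 0 => x
  | k'.+1 => emb1 (emb k' x)
  end.

(* p_n(xW) for W = (w1,w2) in S_m(G) x S_m(G) and n = k + m >= m:
   w2^{-1} x_n w1. *)
Definition actW (x : forall n, Sn G n) m (w1 w2 : Sn G m) k : Sn G (k + m) :=
  smul (smul (sinv (emb k w2)) (x (k + m))) (emb k w1).

End Wreath.

From HB Require Import structures.
From mathcomp Require Import boolp classical_sets topology.
From mathcomp Require Import all_boot all_order all_fingroup all_algebra.

Set Implicit Arguments.
Unset Strict Implicit.
Unset Printing Implicit Defensive.

(* Deleting the point n+1 of x in S_{n+1}(G) merges its coordinate into the next point of its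
   cycle, so the cycle product only changes by a cyclic rotation and the colour of every cycle
   is preserved; the only cycle that disappears is n+1 itself when it is fixed.  Hence
   [x](c) = [p(x)](c) + [n+1 is a fixed point of x of colour c].  The projection commutes with
   the two-sided action of S_n(G), and that action neither moves n+1 nor changes its
   coordinate when n+1 is fixed, so the difference [xW](c) - [x](c) is the same at level n+1
   as at level n. *)

Local Open Scope group_scope.

Lemma card_imset_kernel (aT rT1 rT2 : finType) (f1 : aT -> rT1) (f2 : aT -> rT2)
    (A : {set aT}) :
  (forall a b, (f1 a == f1 b) = (f2 a == f2 b)) -> #|f1 @: A| = #|f2 @: A|.
Proof.
move=> eq_f; pose f a := (f1 a, f2 a).
have inj1 : {in f @: A &, injective fst}.
  move=> _ _ /imsetP[a _ ->] /imsetP[b _ ->] /= E.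
  by rewrite /f E (eqP (_ : f2 a == f2 b)) // -eq_f E.
have inj2 : {in f @: A &, injective snd}.
  move=> _ _ /imsetP[a _ ->] /imsetP[b _ ->] /= E.
  by rewrite /f E (eqP (_ : f1 a == f1 b)) // eq_f E.
rewrite -[f1 @: A]/((fst \o f) @: A) -[f2 @: A]/((snd \o f) @: A) !imset_comp.
by rewrite (card_in_imset inj1) (card_in_imset inj2).
Qed.

Section PermOrbits.
Variable T : finType.
Implicit Types (s : {perm T}) (x : T) (A : {set T}).

Lemma permXS s k x : (s ^+ k.+1) x = s ((s ^+ k) x).
Proof. by rewrite expgSr permM. Qed.

Lemma eq_perm_permV s x y : (x == s y) = (s^-1 x == y).
Proof. by rewrite -(inj_eq (@perm_inj _ s^-1)) permK. Qed.

Lemma porbit_perm1 s x : porbit s (s x) = porbit s x.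
Proof. by have := porbit_perm s 1 x; rewrite expg1. Qed.

Lemma porbit_perm_closed s x : {homo s : y / y \in porbit s x}.
Proof. by move=> y; rewrite -!eq_porbit_mem porbit_perm1. Qed.

Lemma porbit_fix s x : s x = x -> porbit s x = [set x].
Proof.
move=> sx; apply/setP=> y; rewrite inE.
by apply/porbitP/eqP => [[k ->]|->]; [rewrite permX_fix | exists 0; rewrite expg0 perm1].
Qed.

Lemma porbit_sub_closed s x A :
  x \in A -> {homo s : y / y \in A} -> porbit s x \subset A.
Proof.
move=> Ax sA; apply/subsetP=> _ /porbitP[k ->].
by elim: k => [|k IHk]; rewrite ?expg0 ?perm1 // permXS sA.
Qed.

Lemma permX_porbit_neq s x j : 0 < j < #|porbit s x| -> (s ^+ j) x != x.
Proof.
case/andP=> j_gt0 j_lt; apply: contraTneq j_gt0 => sjx.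
have card_gt0 : 0 < #|porbit s x| := leq_ltn_trans (leq0n j) j_lt.
have := nth_uniq x _ _ (uniq_traject_porbit s x); rewrite size_traject.
move=> /(_ 0 j card_gt0 j_lt); rewrite !nth_traject // -(permX s x j) sjx eqxx.
by move=> /esym/eqP <-.
Qed.

Lemma card_porbit_imset_setD1 s A x : (x \in A -> s x \in A) ->
  #|porbit s @: A| = #|porbit s @: (A :\ x)| + ((s x == x) && (x \in A)).
Proof.
move=> sxA; have [Ax|Ax] := boolP (x \in A); last first.
  suff -> : A :\ x = A by rewrite andbF addn0.
  by apply/setP=> y; rewrite !inE; case: eqVneq => // ->; rewrite (negbTE Ax).
rewrite -{1}(setD1K Ax) imsetU1 andbT; have [sx|sx] := eqVneq (s x) x.
  suff fresh : porbit s x \notin porbit s @: (A :\ x) by rewrite cardsU1 fresh addnC.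
  apply/imsetP => -[y]; rewrite !inE porbit_fix // => /andP[y_x _] /setP/(_ y).
  by rewrite porbit_id inE (negbTE y_x).
rewrite addn0 (setUidPr _) // sub1set.
by rewrite -porbit_perm1 imset_f // !inE sx sxA.
Qed.

End PermOrbits.

Section ProjPerm.
Variables (n : nat) (s : 'S_n.+1).

Lemma lift_max_neq (i : 'I_n) : lift ord_max i != ord_max.
Proof. by rewrite eq_sym neq_lift. Qed.

Lemma lift_proj_perm i :
  lift ord_max (proj_perm s i) =
  (if s (lift ord_max i) == ord_max then s ord_max else s (lift ord_max i)).
Proof. by rewrite permE proj_perm_key. Qed.

Lemma proj_perm_lift_eq i j : s (lift ord_max i) = lift ord_max j -> proj_perm s i = j.
Proof.
by move=> sij; apply: (@lift_inj _ ord_max); rewrite lift_proj_perm sij (negbTE (lift_max_neq j)).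
Qed.

Lemma proj_perm_lift_max i :
  s (lift ord_max i) = ord_max -> lift ord_max (proj_perm s i) = s ord_max.
Proof. by move=> si; rewrite lift_proj_perm si eqxx. Qed.

Lemma perm_lift_proj_permV j :
  s (lift ord_max ((proj_perm s)^-1 j)) =
  (if (s ord_max != ord_max) && (lift ord_max j == s ord_max) then ord_max
   else lift ord_max j).
Proof.
set q := (proj_perm s)^-1 j; have := lift_proj_perm q; rewrite /q permKV -/q.
case: eqVneq => [sq E|_ E]; first by rewrite -E eqxx andbT sq lift_max_neq.
by rewrite E (inj_eq perm_inj) (negbTE (lift_max_neq q)) andbF.
Qed.

Lemma lift_proj_permX i k :
    (forall j, j <= k -> (s ^+ j) (lift ord_max i) != ord_max) ->
  lift ord_max ((proj_perm s ^+ k) i) = (s ^+ k) (lift ord_max i).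
Proof.
elim: k => [|k IHk] notmax; first by rewrite !expg0 !perm1.
rewrite !permXS lift_proj_perm IHk => [|j j_le]; last exact/notmax/leqW.
by rewrite -permXS (negbTE (notmax _ (leqnn _))).
Qed.

Lemma mem_porbit_proj_perm i j :
  (lift ord_max j \in porbit s (lift ord_max i)) = (j \in porbit (proj_perm s) i).
Proof.
set O := porbit (proj_perm s) i; apply/idP/idP => [ji|jO].
  (* The s-orbit of lift i can leave lift @: O only through ord_max. *)
  pose V := lift ord_max @: O :|: s @: (lift ord_max @: O).
  have closedV : {homo s : u / u \in V}.
    move=> u; rewrite inE => /orP[Ou|/imsetP[_ /imsetP[a Oa ->] ->]].
      by rewrite inE imset_f ?orbT.
    have taO : proj_perm s a \in O by apply: porbit_perm_closed.
    case: (unliftP ord_max (s (lift ord_max a))) => [b|] sa.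
      by rewrite inE sa imset_f ?orbT // imset_f // -(proj_perm_lift_eq sa).
    by rewrite sa -(proj_perm_lift_max sa) inE imset_f.
  have Vi : lift ord_max i \in V by rewrite inE imset_f ?porbit_id.
  move/subsetP: (porbit_sub_closed Vi closedV) => /(_ _ ji).
  rewrite inE => /orP[/imsetP[b Ob /lift_inj ->] // | /imsetP[_ /imsetP[a Oa ->] sa]].
  by rewrite -(proj_perm_lift_eq (esym sa)) porbit_perm_closed.
pose V := [set a | lift ord_max a \in porbit s (lift ord_max i)].
have closedV : {homo proj_perm s : a / a \in V}.
  move=> a; rewrite !inE -!eq_porbit_mem => /eqP <-; apply/eqP.
  rewrite lift_proj_perm; case: eqP => [sa|_]; last exact: porbit_perm1.
  by rewrite porbit_perm1 -{1}sa porbit_perm1.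
have := subsetP (porbit_sub_closed (_ : i \in V) closedV) _ jO.
by rewrite !inE porbit_id => /(_ isT).
Qed.

Lemma setD1_max_lift (A : {set 'I_n.+1}) (B : {set 'I_n}) :
  (forall i, (lift ord_max i \in A) = (i \in B)) -> A :\ ord_max = lift ord_max @: B.
Proof.
move=> AB; apply/setP=> u; rewrite !inE; case: (unliftP ord_max u) => [i ->|->].
  by rewrite lift_max_neq AB mem_imset //; apply: lift_inj.
by rewrite eqxx; apply/esym/imsetP => -[i _ /eqP]; rewrite eq_sym (negbTE (lift_max_neq i)).
Qed.

Lemma card_porbit_lift i :
  #|porbit s (lift ord_max i)| =
  #|porbit (proj_perm s) i| + (ord_max \in porbit s (lift ord_max i)).
Proof.
rewrite (cardsD1 ord_max) addnC; congr (_ + _).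
rewrite (setD1_max_lift (mem_porbit_proj_perm i)) card_imset //.
exact: lift_inj.
Qed.

Lemma card_porbit_lift_imset (A : {set 'I_n}) :
  #|porbit s @: (lift ord_max @: A)| = #|porbit (proj_perm s) @: A|.
Proof.
rewrite -imset_comp; apply: card_imset_kernel => a b /=.
by rewrite !eq_porbit_mem mem_porbit_proj_perm.
Qed.

End ProjPerm.

Lemma lift_perm_eq_max n (p : 'S_n) u :
  (lift_perm ord_max ord_max p u == ord_max) = (u == ord_max).
Proof.
by have := inj_eq (@perm_inj _ (lift_perm ord_max ord_max p)) u ord_max; rewrite lift_perm_id.
Qed.

Lemma proj_perm_mul_lift n (s : 'S_n.+1) (p : 'S_n) :
  proj_perm (s * lift_perm ord_max ord_max p) = proj_perm s * p.
Proof.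
apply/permP => i; apply: (@lift_inj _ ord_max).
rewrite lift_proj_perm !permM lift_perm_eq_max -(lift_perm_lift ord_max ord_max p).
by rewrite lift_proj_perm; case: ifP.
Qed.

Lemma proj_perm_lift_mul n (s : 'S_n.+1) (p : 'S_n) :
  proj_perm (lift_perm ord_max ord_max p * s) = p * proj_perm s.
Proof.
apply/permP => i; apply: (@lift_inj _ ord_max).
by rewrite lift_proj_perm !permM lift_perm_lift lift_perm_id lift_proj_perm.
Qed.

Section Wreath.
Variables (G : Type) (mul : G -> G -> G) (inv : G -> G) (e : G).
Hypotheses (mulA : associative mul) (mul1g : left_id e mul) (mulg1 : right_id e mul).
Hypothesis mulgV : right_inverse e inv mul.

Lemma emb1_lift n (u : Sn G n) i : (emb1 e u).1 (lift ord_max i) = u.1 i.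
Proof. by rewrite ffunE liftK. Qed.

Lemma emb1_max n (u : Sn G n) : (emb1 e u).1 ord_max = e.
Proof. by rewrite ffunE unlift_none. Qed.

Lemma sinv_emb1 n (u : Sn G n) : sinv inv (emb1 e u) = emb1 e (sinv inv u).
Proof.
rewrite /sinv /= lift_permV; congr (_, _); apply/ffunP => i.
rewrite [RHS]ffunE; case: (unliftP ord_max i) => [j|] ->; rewrite ffunE.
  by rewrite lift_perm_lift emb1_lift ffunE.
by rewrite lift_perm_id emb1_max -[inv e]mul1g mulgV.
Qed.

Lemma proj_emb1_smul n (u : Sn G n) (y : Sn G n.+1) :
  proj mul (smul mul (emb1 e u) y) = smul mul u (proj mul y).
Proof.
rewrite /proj /smul /=; congr (_, _); last exact: proj_perm_mul_lift.
apply/ffunP => i; rewrite !ffunE /= liftK unlift_none permM lift_perm_eq_max.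
rewrite eq_perm_permV lift_permV lift_perm_lift lift_perm_id mul1g.
by case: ifP => // _; rewrite mulA.
Qed.

Lemma proj_smul_emb1 n (y : Sn G n.+1) (v : Sn G n) :
  proj mul (smul mul y (emb1 e v)) = smul mul (proj mul y) v.
Proof.
rewrite /proj /smul /=; congr (_, _); last exact: proj_perm_lift_mul.
apply/ffunP => i; rewrite !ffunE /= permM lift_perm_id.
have := perm_lift_proj_permV y.2 i; set q := (proj_perm y.2)^-1 i.
have y2V b : y.2 (lift ord_max q) = b -> y.2^-1 b = lift ord_max q.
  by move=> <-; rewrite permK.
case: ifP => [/andP[_ /eqP succ_i] /y2V qV | _ /y2V qV]; last by rewrite qV liftK.
by rewrite qV succ_i permK liftK unlift_none mulg1 mulA.
Qed.

Variable c : set G.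
Hypothesis c_conj : forall h a, c a -> c (mul (mul h a) (inv h)).

Lemma colour_mulC a b : c (mul a b) -> c (mul b a).
Proof. by move/(c_conj b); rewrite !mulA -(mulA _ b) mulgV mulg1. Qed.

Lemma cycprod_perm n (g : {ffun 'I_n -> G}) (s : 'S_n) i k :
  mul (cycprod mul e g s (s i) k) (g i) = cycprod mul e g s i k.+1.
Proof.
elim: k => [|k IHk] /=; first by rewrite expg0 perm1 mul1g mulg1.
by rewrite -mulA IHk /= -permM -expgS.
Qed.

Lemma cycle_elt_perm n (x : Sn G n) i :
  cycle_elt mul e x (x.2 i) = mul (mul (x.1 i) (cycle_elt mul e x i)) (inv (x.1 i)).
Proof.
rewrite /cycle_elt porbit_perm1; set P := cycprod _ _ _ _ (x.2 i) _.
by rewrite -[P]mulg1 -[X in mul P X](mulgV (x.1 i)) mulA cycprod_perm /= permX iter_porbit.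
Qed.

Definition colored n (x : Sn G n) : {set 'I_n} := [set i | `[< c (cycle_elt mul e x i) >]].

Lemma colored_perm n (x : Sn G n) i : i \in colored x -> x.2 i \in colored x.
Proof. by rewrite !inE cycle_elt_perm => /asboolP/c_conj/asboolP. Qed.

Lemma colored_porbit n (x : Sn G n) i j :
  j \in porbit x.2 i -> (j \in colored x) = (i \in colored x).
Proof.
have sub a b : b \in porbit x.2 a -> a \in colored x -> b \in colored x.
  by move=> ba a_col; apply: subsetP ba; apply: porbit_sub_closed a_col (@colored_perm n x).
by move=> ji; apply/idP/idP; apply: sub; rewrite // porbit_sym.
Qed.

Lemma ncolE n (x : Sn G n) : ncol mul e x c = #|porbit x.2 @: colored x|.
Proof.
congr #|pred_of_set _|; apply/setP => O; rewrite inE; apply/andP/imsetP.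
  case=> /imsetP[i _ ->] /asboolP[j ji j_col]; exists j; first by rewrite inE asboolE.
  by apply/esym/eqP; rewrite eq_porbit_mem.
case=> i i_col ->; split; first exact: imset_f.
by apply/asboolP; exists i; rewrite ?porbit_id //; move: i_col; rewrite inE asboolE.
Qed.

Definition colored_fixed_last n (y : Sn G n.+1) : bool :=
  (y.2 ord_max == ord_max) && `[< c (y.1 ord_max) >].

Section Projection.
Variables (n : nat) (y : Sn G n.+1).

Lemma cycprod_proj i k :
    (forall j, j < k -> (y.2 ^+ j) (lift ord_max i) != ord_max) ->
  cycprod mul e (proj mul y).1 (proj mul y).2 i k =
  mul (cycprod mul e y.1 y.2 (lift ord_max i) k)
      (if (0 < k) && (lift ord_max i == y.2 ord_max) then y.1 ord_max else e).
Proof.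
elim: k => [|k IHk] notmax /=; first by rewrite mulg1.
rewrite IHk => [|j j_lt]; last exact/notmax/ltnW.
rewrite ffunE lift_proj_permX => [|j j_le]; last exact/notmax.
case: k {IHk} notmax => [|k] notmax /=; rewrite ?expg0 ?perm1.
  case: (eqVneq (lift ord_max i) (y.2 ord_max)) => [<-|_]; last by rewrite andbF !mulg1.
  by rewrite lift_max_neq /= !mulg1.
by rewrite permXS (inj_eq perm_inj) (negbTE (notmax k _)) ?andbF ?mulA.
Qed.

Lemma cycle_elt_proj_notin i :
  ord_max \notin porbit y.2 (lift ord_max i) ->
  cycle_elt mul e (proj mul y) i = cycle_elt mul e y (lift ord_max i).
Proof.
move=> max_out; rewrite /cycle_elt card_porbit_lift (negbTE max_out) addn0.
rewrite cycprod_proj => [|j _]; last first.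
  by apply: contraNneq max_out => jmax; rewrite -{1}jmax mem_porbit.
case: eqVneq => [i_succ|_]; last by rewrite andbF mulg1.
by move: max_out; rewrite porbit_sym i_succ porbit_perm_closed // porbit_id.
Qed.

Lemma colored_proj_succ b : y.2 ord_max = lift ord_max b ->
  (b \in colored (proj mul y)) = (lift ord_max b \in colored y).
Proof.
move=> succ_b; set r := #|porbit (proj_perm y.2) b|.
have max_in : ord_max \in porbit y.2 (lift ord_max b).
  by rewrite porbit_sym -succ_b porbit_perm_closed // porbit_id.
have card_b : #|porbit y.2 (lift ord_max b)| = r.+1.
  by rewrite card_porbit_lift max_in addn1.
have r_gt0 : 0 < r by rewrite lt0n card_porbit_neq0.
have last_max : (y.2 ^+ r) (lift ord_max b) = ord_max.
  by apply: (@perm_inj _ y.2); rewrite -permXS -card_b permX iter_porbit.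
have notmax j : j < r -> (y.2 ^+ j) (lift ord_max b) != ord_max.
  move=> j_lt; apply: contra (@permX_porbit_neq _ y.2 (lift ord_max b) j.+1 _) => [/eqP jmax|].
    by rewrite permXS jmax succ_b.
  by rewrite card_b ltnS.
set P := cycprod mul e y.1 y.2 (lift ord_max b) r.
have proj_b : cycle_elt mul e (proj mul y) b = mul P (y.1 ord_max).
  by rewrite /cycle_elt cycprod_proj // r_gt0 succ_b eqxx.
have y_b : cycle_elt mul e y (lift ord_max b) = mul (y.1 ord_max) P.
  by rewrite /cycle_elt card_b /= last_max.
by rewrite !inE proj_b y_b; apply/asboolP/asboolP; apply: colour_mulC.
Qed.

Lemma colored_proj i : (i \in colored (proj mul y)) = (lift ord_max i \in colored y).
Proof.
have [max_in|] := boolP (ord_max \in porbit y.2 (lift ord_max i)); last first.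
  by move=> max_out; rewrite !inE cycle_elt_proj_notin.
case: (unliftP ord_max (y.2 ord_max)) => [b succ_b|fix_max].
  have b_in : b \in porbit (proj_perm y.2) i.
    by rewrite -mem_porbit_proj_perm -succ_b porbit_perm_closed.
  rewrite -(colored_porbit (x := proj mul y) b_in) colored_proj_succ //.
  by rewrite (colored_porbit (j := lift ord_max b) (i := lift ord_max i)) ?mem_porbit_proj_perm.
by move: max_in; rewrite porbit_sym porbit_fix // inE (negbTE (lift_max_neq i)).
Qed.

Lemma ncol_proj : ncol mul e y c = ncol mul e (proj mul y) c + colored_fixed_last y.
Proof.
rewrite !ncolE (card_porbit_imset_setD1 (x := ord_max)); last exact: colored_perm.
rewrite (setD1_max_lift (B := colored (proj mul y))) => [|i]; last by rewrite colored_proj.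
rewrite card_porbit_lift_imset; congr (_ + _).
rewrite /colored_fixed_last inE; case: eqP => //= fix_max.
by rewrite /cycle_elt porbit_fix // cards1 /= expg0 perm1 mulg1.
Qed.

End Projection.

Lemma colored_fixed_last_emb1_smul n (u : Sn G n) (y : Sn G n.+1) :
  colored_fixed_last (smul mul (emb1 e u) y) = colored_fixed_last y.
Proof.
rewrite /colored_fixed_last /= permM lift_perm_eq_max ffunE emb1_max.
by rewrite lift_permV lift_perm_id mul1g.
Qed.

Lemma colored_fixed_last_smul_emb1 n (y : Sn G n.+1) (v : Sn G n) :
  colored_fixed_last (smul mul y (emb1 e v)) = colored_fixed_last y.
Proof.
rewrite /colored_fixed_last /= permM lift_perm_id; case: eqP => //= fix_max.
have fixV : y.2^-1 ord_max = ord_max by rewrite -{1}fix_max permK.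
by rewrite ffunE fixV emb1_max mulg1.
Qed.

Lemma ncol_smul_emb1 n (y : Sn G n.+1) (u v : Sn G n) :
  ncol mul e (smul mul (smul mul (sinv inv (emb1 e u)) y) (emb1 e v)) c =
  ncol mul e (smul mul (smul mul (sinv inv u) (proj mul y)) v) c + colored_fixed_last y.
Proof.
rewrite ncol_proj proj_smul_emb1 sinv_emb1 proj_emb1_smul.
by rewrite colored_fixed_last_smul_emb1 colored_fixed_last_emb1_smul.
Qed.

End Wreath.

Lemma conj_class_conjg (G : topologicalType) (mul : G -> G -> G) (inv : G -> G) (e : G)
    (c : set G) :
  compact_group mul inv e -> conj_class mul inv c ->
  forall h a, c a -> c (mul (mul h a) (inv h)).
Proof.
case=> mulA unit inverse _ _ [a0 ->] h _ [k ->]; exists (mul h k).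
have hk_inv : mul (mul h k) (mul (inv k) (inv h)) = e.
  rewrite mulA -(mulA h) (proj2 (inverse k)) (proj2 (unit h)).
  exact: (proj2 (inverse h)).
have invM : inv (mul h k) = mul (inv k) (inv h).
  rewrite -[inv (mul h k)](proj2 (unit _)) -hk_inv mulA (proj1 (inverse _)).
  exact: (proj1 (unit _)).
by rewrite invM !mulA.
Qed.

Local Close Scope group_scope.
Unset Implicit Arguments.

Theorem proposition4p2 (G : topologicalType) (mul : G -> G -> G) (inv : G -> G) (e : G)
  (HG : compact_group mul inv e)
  (x : forall n, Sn G n) (Hx : is_thread mul x)
  (m : nat) (w1 w2 : Sn G m)
  (c : set G) (Hc : conj_class mul inv c)
  (k1 k2 : nat) :
  ((ncol mul e (actW mul inv e x w1 w2 k1) c)%:Z - (ncol mul e (x (k1 + m)%N) c)%:Z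
   = (ncol mul e (actW mul inv e x w1 w2 k2) c)%:Z - (ncol mul e (x (k2 + m)%N) c)%:Z)%R.
Proof.
have c_conj := conj_class_conjg HG Hc.
case: HG => mulA unit inverse _ _.
have mul1g : left_id e mul by move=> a; case: (unit a).
have mulg1 : right_id e mul by move=> a; case: (unit a).
have mulgV : right_inverse e inv mul by move=> a; case: (inverse a).
pose D k := ((ncol mul e (actW mul inv e x w1 w2 k) c)%:Z - (ncol mul e (x (k + m)%N) c)%:Z)%R.
have D_succ k : D k.+1 = D k.
  rewrite /D /actW /= (ncol_smul_emb1 mulA mul1g mulg1 mulgV c_conj).
  rewrite (ncol_proj mulA mul1g mulg1 mulgV c_conj (x _)) (addnC (ncol _ _ (proj _ _) _)).
  by rewrite Hx !PoszD GRing.addrKA.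
have D_0 k : D k = D 0 by elim: k => // k IHk; rewrite D_succ.
by rewrite -/(D k1) -/(D k2) !D_0.
Qed.
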